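(* Let $m,n$ be relatively prime natural numbers. Let $J$ be the lattice of all clones $C\subseteq\mathcal{O}$ containing the binary addition modulo $mn$, and let $J_m$ (resp. $J_n$) be the lattice of all clones on $\mathbb{Z}_m$ (resp. $\mathbb{Z}_n$) containing the addition modulo $m$ (resp. modulo $n$). Then $J$ is isomorphic to the direct product $J_m\times J_n$, via the mutually inverse maps $C\mapsto (C_m,C_n)$ and $(D,E)\mapsto D\times E$.
   Context: $\mathbb{Z}_k=\{0,\dots,k-1\}$, and $x \bmod k$ is the unique element of $\mathbb{Z}_k$ congruent to $x$ modulo $k$. $\mathcal{O}$ is the set of all finitary operations on $\mathbb{Z}_{mn}$ preserving the congruences $\equiv \pmod m$ and $\equiv\pmod n$. For $k$-ary $f\in\mathcal{O}$, $f_m$ is the operation on $\mathbb{Z}_m$ given by $f_m(x_1,\dots,x_k)=f(x_1,\dots,x_k)\bmod m$, similarly $f_n$. For $k$-ary operations $g$ on $\mathbb{Z}_m$ and $h$ on $\mathbb{Z}_n$, $g\times h$ is the $k$-ary operation on $\mathbb{Z}_{mn}$ whose value at $(x_1,\dots,x_k)$ is the unique element of $\mathbb{Z}_{mn}$ congruent to $g(x_1\bmod m,\dots,x_k\bmod m)$ modulo $m$ and to $h(x_1\bmod n,\dots,x_k\bmod n)$ modulo $n$. For a clone $C\subseteq \mathcal{O}$, $C_m=\{f_m\mid f\in C\}$, $C_n=\{f_n\mid f\in C\}$; for clones $D$ on $\mathbb{Z}_m$, $E$ on $\mathbb{Z}_n$, $D\times E=\{g\times h\mid g\in D, h\in E\text{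 of the same arity}\}$. *)

From mathcomp Require Import all_boot.
Set Implicit Arguments.
Unset Strict Implicit.
Unset Printing Implicit Defensive.

Definition ord_mod (k : nat) (hk : 0 < k) (x : nat) : 'I_k :=
  Ordinal (ltn_pmod x hk).

Lemma mn_gt0 (m n : nat) : 0 < m -> 0 < n -> 0 < m * n.
Proof. by move=> hm hn; rewrite muln_gt0 hm hn. Qed.

Definition op (A : Type) (k : nat) := ('I_k -> A) -> A.

(* A set of finitary operations (of positive arity): the component at index k
   is the set of (k+1)-ary operations. *)
Definition opset (A : Type) := forall k : nat, op A k.+1 -> Prop.

Definition proj (A : Type) (k : nat) (i : 'I_k) : op A k := fun x => x i.

Definition comp (A : Type) (k l : nat) (f : op A k) (g : 'I_k -> op A l) : op A l :=
  fun x => f (fun i => g i x).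

Definition is_clone (A : Type) (C : opset A) : Prop :=
  (forall (k : nat) (i : 'I_k.+1), C k (proj i)) /\
  (forall (k l : nat) (f : op A k.+1) (g : 'I_k.+1 -> op A l.+1),
      C k f -> (forall i, C l (g i)) -> C l (comp f g)).

Definition subset_ops (A : Type) (C D : opset A) : Prop :=
  forall k f, C k f -> D k f.

Definition eq_ops (A : Type) (C D : opset A) : Prop :=
  forall k f, C k f <-> D k f.

Definition addmod (k : nat) (hk : 0 < k) : op 'I_k 2 :=
  fun x => ord_mod hk (x ord0 + x ord_max).

Definition preserves_mod (N d k : nat) (f : op 'I_N k) : Prop :=
  forall x y : 'I_k -> 'I_N,
    (forall i, x i = y i %[mod d]) -> f x = f y %[mod d].

(* membership in the lattice J: clones on Z_{mn} contained in O and containing + mod mn *)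
Definition in_J (m n : nat) (hm : 0 < m) (hn : 0 < n) (C : opset 'I_(m * n)) : Prop :=
  [/\ is_clone C,
      (forall k f, C k f -> preserves_mod m f /\ preserves_mod n f)
    & C 1 (addmod (mn_gt0 hm hn))].

Definition in_Jk (k : nat) (hk : 0 < k) (D : opset 'I_k) : Prop :=
  is_clone D /\ D 1 (addmod hk).

Definition restr_m (m n : nat) (hm : 0 < m) (hn : 0 < n) (k : nat)
  (f : op 'I_(m * n) k) : op 'I_m k :=
  fun x => ord_mod hm (f (fun i => widen_ord (leq_pmulr m hn) (x i))).

Definition restr_n (m n : nat) (hm : 0 < m) (hn : 0 < n) (k : nat)
  (f : op 'I_(m * n) k) : op 'I_n k :=
  fun x => ord_mod hn (f (fun i => widen_ord (leq_pmull n hm) (x i))).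

Definition prod_op (m n : nat) (hm : 0 < m) (hn : 0 < n) (k : nat)
  (g : op 'I_m k) (h : op 'I_n k) : op 'I_(m * n) k :=
  fun x => ord_mod (mn_gt0 hm hn)
    (chinese m n (g (fun i => ord_mod hm (x i))) (h (fun i => ord_mod hn (x i)))).

Definition clone_m (m n : nat) (hm : 0 < m) (hn : 0 < n) (C : opset 'I_(m * n))
  : opset 'I_m :=
  fun k g => exists f, C k f /\ g = restr_m hm hn f.

Definition clone_n (m n : nat) (hm : 0 < m) (hn : 0 < n) (C : opset 'I_(m * n))
  : opset 'I_n :=
  fun k h => exists f, C k f /\ h = restr_n hm hn f.

Definition clone_prod (m n : nat) (hm : 0 < m) (hn : 0 < n)
  (D : opset 'I_m) (E : opset 'I_n) : opset 'I_(m * n) :=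
  fun k u => exists g h, [/\ D k g, E k h & u = prod_op hm hn g h].

(* By the Chinese remainder theorem an operation on Z_mn preserving both
   congruences is the same as the pair of its reductions f_m and f_n, so the
   maps C |-> (C_m, C_n) and (D, E) |-> D x E are inverse to each other once we
   know that every clone C in J is closed under f, f' |-> f_m x f'_n.  That
   holds because f_m x f'_n = e1 f + e2 f' for the CRT idempotents
   e1 = (1, 0) and e2 = (0, 1), and a clone containing + is closed under
   sums and positive integer multiples. *)

From Stdlib Require Import FunctionalExtensionality IndefiniteDescription.
From Pilot Require Import Defs.
From mathcomp Require Import all_boot.
Set Implicit Arguments.
Unset Strict Implicit.

Lemma lincomb_mod d c1 c2 e1 e2 a b : c1 = e1 %[mod d] -> c2 = e2 %[mod d] ->
  c1 * a + c2 * b = e1 * a + e2 * b %[mod d].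
Proof.
move=> h1 h2.
by rewrite -modnDm -(modnMml c1) h1 modnMml -(modnMml c2) h2 modnMml modnDm.
Qed.

Section ClonesWithAddition.

Variables (N : nat) (hN : 0 < N) (C : opset 'I_N).
Arguments C : clear implicits.
Hypotheses (C_clone : is_clone C) (C_add : C 1 (addmod hN)).

Lemma clone_addD k (f f' : op 'I_N k.+1) : C k f -> C k f' ->
  C k (fun x => ord_mod hN (f x + f' x)).
Proof.
move=> Cf Cf'; pose g (i : 'I_2) := if i == ord0 then f else f'.
have -> : (fun x => ord_mod hN (f x + f' x)) = Defs.comp (addmod hN) g.
  by apply: functional_extensionality => x; apply: val_inj.
by case: C_clone => _ Ccomp; apply: Ccomp => // i; rewrite /g; case: (i == ord0).
Qed.

Lemma clone_addMn k (f : op 'I_N k.+1) c : 0 < c -> C k f ->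
  C k (fun x => ord_mod hN (c * f x)).
Proof.
case: c => // c _ Cf; elim: c => [|c IHc].
  suff -> : (fun x => ord_mod hN (1 * f x)) = f by [].
  by apply: functional_extensionality => x; apply: val_inj; rewrite /= mul1n modn_small.
have -> : (fun x => ord_mod hN (c.+2 * f x)) =
          (fun x => ord_mod hN (f x + ord_mod hN (c.+1 * f x))).
  by apply: functional_extensionality => x; apply: val_inj; rewrite /= modnDmr mulSn.
exact: clone_addD.
Qed.

End ClonesWithAddition.

(* f_m and f_n are both instances of reduction modulo d of operations on Z_N:
   [restr_m hm hn f] is convertible to [restr hm (leq_pmulr m hn) f]. *)
Section Reduction.

Variables (N d : nat) (hd : 0 < d) (hdN : d <= N).

Definition restr k (f : op 'I_N k) : op 'I_d k :=
  fun x => ord_mod hd (f (fun i => widen_ord hdN (x i))).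

Definition clone_restr (C : opset 'I_N) : opset 'I_d :=
  fun k g => exists f, C k f /\ g = restr f.

Lemma restr_ord_mod k (f : op 'I_N k) (x : 'I_k -> 'I_N) : preserves_mod d f ->
  restr f (fun i => ord_mod hd (x i)) = ord_mod hd (f x).
Proof. by move=> f_pres; apply: val_inj; apply: f_pres => i /=; rewrite modn_mod. Qed.

Lemma restr_eq k (f : op 'I_N k) (g : op 'I_d k) :
  (forall x, (f x : nat) = g (fun i => ord_mod hd (x i)) %[mod d]) -> restr f = g.
Proof.
move=> fg; apply: functional_extensionality => x; apply: val_inj => /=.
rewrite fg modn_small //; congr (nat_of_ord (g _)).
by apply: functional_extensionality => i; apply: val_inj; rewrite /= modn_small.
Qed.

Lemma restr_proj k (i : 'I_k) : restr (proj i) = proj i.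
Proof. by apply: restr_eq => x; rewrite /proj /= modn_mod. Qed.

Lemma restr_addmod (hN : 0 < N) : d %| N -> restr (addmod hN) = addmod hd.
Proof. by move=> dvd_dN; apply: restr_eq => x; rewrite /= modn_dvdm // modnDm modn_mod. Qed.

Lemma is_clone_restr C : is_clone C -> (forall k f, C k f -> preserves_mod d f) ->
  is_clone (clone_restr C).
Proof.
case=> Cproj Ccomp C_pres; split=> [k i | k l _ g [f [Cf ->]] Cg].
  by exists (proj i); rewrite restr_proj.
have [G HG] := functional_choice _ Cg.
exists (Defs.comp f G); split; first by apply: Ccomp => // i; case: (HG i).
apply: functional_extensionality => x; rewrite /Defs.comp.
have -> : (fun i => g i x) = fun i => ord_mod hd (G i (fun j => widen_ord hdN (x j))).
  by apply: functional_extensionality => i; case: (HG i) => _ ->.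
by rewrite restr_ord_mod //; apply: C_pres.
Qed.

Lemma in_Jk_clone_restr (hN : 0 < N) C : d %| N -> is_clone C ->
  (forall k f, C k f -> preserves_mod d f) -> C 1 (addmod hN) ->
  in_Jk hd (clone_restr C).
Proof.
move=> dvd_dN Cclone C_pres Cadd; split; first exact: is_clone_restr.
by exists (addmod hN); rewrite restr_addmod.
Qed.

End Reduction.

Section ChineseRemainder.

Variables (m n : nat) (hm : 0 < m) (hn : 0 < n).
Hypothesis mn_coprime : coprime m n.

Let hmn := mn_gt0 hm hn.
Let m_dvd_mn : m %| m * n := dvdn_mulr n (dvdnn m).
Let n_dvd_mn : n %| m * n := dvdn_mull m (dvdnn n).

Lemma op_eq_mod k (u v : op 'I_(m * n) k) :
  (forall x, (u x : nat) = v x %[mod m]) -> (forall x, (u x : nat) = v x %[mod n]) ->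
  u = v.
Proof.
move=> eq_m eq_n; apply: functional_extensionality => x; apply: val_inj.
have : u x == v x %[mod m * n] by rewrite chinese_remainder // eq_m eq_n !eqxx.
by rewrite !modn_small // => /eqP.
Qed.

Lemma prod_op_modl k (g : op 'I_m k) (h : op 'I_n k) x :
  (prod_op hm hn g h x : nat) = g (fun i => ord_mod hm (x i)) %[mod m].
Proof. by rewrite /= (modn_dvdm _ m_dvd_mn) chinese_modl. Qed.

Lemma prod_op_modr k (g : op 'I_m k) (h : op 'I_n k) x :
  (prod_op hm hn g h x : nat) = h (fun i => ord_mod hn (x i)) %[mod n].
Proof. by rewrite /= (modn_dvdm _ n_dvd_mn) chinese_modr. Qed.

Lemma restr_m_prod_op k (g : op 'I_m k) (h : op 'I_n k) :
  restr_m hm hn (prod_op hm hn g h) = g.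
Proof. exact: restr_eq (prod_op_modl g h). Qed.

Lemma restr_n_prod_op k (g : op 'I_m k) (h : op 'I_n k) :
  restr_n hm hn (prod_op hm hn g h) = h.
Proof. exact: restr_eq (prod_op_modr g h). Qed.

Lemma prod_op_restr_modl k (f f' : op 'I_(m * n) k) x : preserves_mod m f ->
  (prod_op hm hn (restr_m hm hn f) (restr_n hm hn f') x : nat) = f x %[mod m].
Proof.
by move=> f_pres; rewrite prod_op_modl modn_mod; apply: f_pres => i /=; rewrite modn_mod.
Qed.

Lemma prod_op_restr_modr k (f f' : op 'I_(m * n) k) x : preserves_mod n f' ->
  (prod_op hm hn (restr_m hm hn f) (restr_n hm hn f') x : nat) = f' x %[mod n].
Proof.
by move=> f'_pres; rewrite prod_op_modr modn_mod; apply: f'_pres => i /=; rewrite modn_mod.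
Qed.

Lemma prod_op_restr k (f : op 'I_(m * n) k) :
  preserves_mod m f -> preserves_mod n f ->
  prod_op hm hn (restr_m hm hn f) (restr_n hm hn f) = f.
Proof.
by move=> pres_m pres_n; apply: op_eq_mod => x;
  [rewrite prod_op_restr_modl | rewrite prod_op_restr_modr].
Qed.

Lemma in_J_prod_op_restr C k (f f' : op 'I_(m * n) k.+1) :
  in_J hm hn C -> C k f -> C k f' ->
  C k (prod_op hm hn (restr_m hm hn f) (restr_n hm hn f')).
Proof.
case=> Cclone C_pres Cadd Cf Cf'.
have [pres_m _] := C_pres _ _ Cf; have [_ pres_n'] := C_pres _ _ Cf'.
(* the CRT idempotents, shifted by mn to make them positive *)
pose e1 := chinese m n 1 0 + m * n; pose e2 := chinese m n 0 1 + m * n.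
have e1m : e1 = 1 %[mod m] by rewrite /e1 addnC mulnC modnMDl chinese_modl.
have e1n : e1 = 0 %[mod n] by rewrite /e1 addnC modnMDl chinese_modr.
have e2m : e2 = 0 %[mod m] by rewrite /e2 addnC mulnC modnMDl chinese_modl.
have e2n : e2 = 1 %[mod n] by rewrite /e2 addnC modnMDl chinese_modr.
have e1_gt0 : 0 < e1 by rewrite addn_gt0 hmn orbT.
have e2_gt0 : 0 < e2 by rewrite addn_gt0 hmn orbT.
have <- : (fun x => ord_mod hmn (ord_mod hmn (e1 * f x) + ord_mod hmn (e2 * f' x)))
          = prod_op hm hn (restr_m hm hn f) (restr_n hm hn f').
  apply: op_eq_mod => x /=.
  - rewrite prod_op_restr_modl // (modn_dvdm _ m_dvd_mn) -modnDm !(modn_dvdm _ m_dvd_mn).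
    by rewrite modnDm (lincomb_mod _ _ e1m e2m) mul1n mul0n addn0.
  - rewrite prod_op_restr_modr // (modn_dvdm _ n_dvd_mn) -modnDm !(modn_dvdm _ n_dvd_mn).
    by rewrite modnDm (lincomb_mod _ _ e1n e2n) mul1n mul0n.
by apply: clone_addD => //; apply: clone_addMn.
Qed.

Lemma ord_mod_prod_opl k (g : op 'I_m k) (h : op 'I_n k) x :
  ord_mod hm (prod_op hm hn g h x) = g (fun i => ord_mod hm (x i)).
Proof. by apply: val_inj; rewrite /= prod_op_modl modn_small. Qed.

Lemma ord_mod_prod_opr k (g : op 'I_m k) (h : op 'I_n k) x :
  ord_mod hn (prod_op hm hn g h x) = h (fun i => ord_mod hn (x i)).
Proof. by apply: val_inj; rewrite /= prod_op_modr modn_small. Qed.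

Lemma prod_op_preserves_mod k (g : op 'I_m k) (h : op 'I_n k) :
  preserves_mod m (prod_op hm hn g h) /\ preserves_mod n (prod_op hm hn g h).
Proof.
split=> x y xy; rewrite ?prod_op_modl ?prod_op_modr;
  [congr (nat_of_ord (g _) %% m) | congr (nat_of_ord (h _) %% n)];
  by apply: functional_extensionality => i; apply: val_inj; exact: xy.
Qed.

Lemma prod_op_proj k (i : 'I_k) : prod_op hm hn (proj i) (proj i) = proj i.
Proof.
by apply: op_eq_mod => x; rewrite ?prod_op_modl ?prod_op_modr /proj /= modn_mod.
Qed.

Lemma prod_op_addmod : prod_op hm hn (addmod hm) (addmod hn) = addmod hmn.
Proof.
apply: op_eq_mod => x.
- by rewrite prod_op_modl /= (modn_dvdm _ m_dvd_mn) modn_mod modnDm.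
- by rewrite prod_op_modr /= (modn_dvdm _ n_dvd_mn) modn_mod modnDm.
Qed.

Lemma prod_op_comp k l (g : op 'I_m k) (h : op 'I_n k)
    (G : 'I_k -> op 'I_m l) (H : 'I_k -> op 'I_n l) :
  Defs.comp (prod_op hm hn g h) (fun i => prod_op hm hn (G i) (H i)) =
  prod_op hm hn (Defs.comp g G) (Defs.comp h H).
Proof.
apply: op_eq_mod => x; rewrite /Defs.comp ?prod_op_modl ?prod_op_modr.
- by congr (nat_of_ord (g _) %% m); apply: functional_extensionality => i;
    rewrite ord_mod_prod_opl.
- by congr (nat_of_ord (h _) %% n); apply: functional_extensionality => i;
    rewrite ord_mod_prod_opr.
Qed.

Lemma in_J_clone_prod D E : in_Jk hm D -> in_Jk hn E -> in_J hm hn (clone_prod hm hn D E).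
Proof.
case=> [[Dproj Dcomp] Dadd] [[Eproj Ecomp] Eadd]; split; first split.
- by move=> k i; exists (proj i), (proj i); rewrite prod_op_proj.
- move=> k l _ v [g [h [Dg Eh ->]]] Cv.
  have /functional_choice [GH HGH] : forall i, exists p : op 'I_m l.+1 * op 'I_n l.+1,
      [/\ D l p.1, E l p.2 & v i = prod_op hm hn p.1 p.2].
    by move=> i; have [g' [h' ?]] := Cv i; exists (g', h').
  exists (Defs.comp g (fun i => (GH i).1)), (Defs.comp h (fun i => (GH i).2)); split.
  + by apply: Dcomp => // i; case: (HGH i).
  + by apply: Ecomp => // i; case: (HGH i).
  rewrite -prod_op_comp; congr (Defs.comp _ _).
  by apply: functional_extensionality => i; case: (HGH i).
- by move=> k _ [g [h [_ _ ->]]]; exact: prod_op_preserves_mod.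
- by exists (addmod hm), (addmod hn); rewrite prod_op_addmod.
Qed.

Lemma clone_prod_clone_restr C :
  in_J hm hn C -> eq_ops (clone_prod hm hn (clone_m hm hn C) (clone_n hm hn C)) C.
Proof.
move=> HC k u; split=> [[g [h [[f [Cf ->]] [f' [Cf' ->]] ->]]] | Cu].
  exact: in_J_prod_op_restr.
have [_ C_pres _] := HC; have [pres_m pres_n] := C_pres _ _ Cu.
exists (restr_m hm hn u), (restr_n hm hn u).
by split; [exists u | exists u | rewrite prod_op_restr].
Qed.

(* Surjectivity onto D uses that E is nonempty in every arity (it has projections). *)
Lemma clone_m_clone_prod D E : is_clone E -> eq_ops (clone_m hm hn (clone_prod hm hn D E)) D.
Proof.
case=> Eproj _ k g; split=> [[_ [[g' [h' [Dg _ ->]]] ->]] | Dg].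
  by rewrite restr_m_prod_op.
exists (prod_op hm hn g (proj ord0)); rewrite restr_m_prod_op //.
by split=> //; exists g, (proj ord0).
Qed.

Lemma clone_n_clone_prod D E : is_clone D -> eq_ops (clone_n hm hn (clone_prod hm hn D E)) E.
Proof.
case=> Dproj _ k h; split=> [[_ [[g' [h' [_ Eh ->]]] ->]] | Eh].
  by rewrite restr_n_prod_op.
exists (prod_op hm hn (proj ord0) h); rewrite restr_n_prod_op //.
by split=> //; exists (proj ord0), h.
Qed.

Lemma subset_ops_clone_restr C C' : in_J hm hn C -> in_J hm hn C' ->
  subset_ops C C' <->
  subset_ops (clone_m hm hn C) (clone_m hm hn C') /\
  subset_ops (clone_n hm hn C) (clone_n hm hn C').
Proof.
move=> [_ C_pres _] HC'; split.
  by move=> CC'; split=> k _ [f [Cf ->]]; exists f; split=> //; exact: CC'.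
case=> sub_m sub_n k f Cf; have [pres_m pres_n] := C_pres _ _ Cf.
have /sub_m [f1 [C'f1 e1]] : clone_m hm hn C (restr_m hm hn f) by exists f.
have /sub_n [f2 [C'f2 e2]] : clone_n hm hn C (restr_n hm hn f) by exists f.
by rewrite -(prod_op_restr pres_m pres_n) e1 e2; exact: in_J_prod_op_restr.
Qed.

End ChineseRemainder.

Theorem theorem2p2 (m n : nat) (hm : 0 < m) (hn : 0 < n) (hcop : coprime m n) :
  (* C |-> (C_m, C_n) maps J into J_m x J_n *)
  (forall C, in_J hm hn C -> in_Jk hm (clone_m hm hn C) /\ in_Jk hn (clone_n hm hn C)) /\
  (* (D, E) |-> D x E maps J_m x J_n into J *)
  (forall D E, in_Jk hm D -> in_Jk hn E -> in_J hm hn (clone_prod hm hn D E)) /\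
  (* the two maps are mutually inverse *)
  (forall C, in_J hm hn C -> eq_ops (clone_prod hm hn (clone_m hm hn C) (clone_n hm hn C)) C) /\
  (forall D E, in_Jk hm D -> in_Jk hn E ->
     eq_ops (clone_m hm hn (clone_prod hm hn D E)) D /\
     eq_ops (clone_n hm hn (clone_prod hm hn D E)) E) /\
  (* and they are order isomorphisms (hence lattice isomorphisms) *)
  (forall C C', in_J hm hn C -> in_J hm hn C' ->
     (subset_ops C C' <->
      subset_ops (clone_m hm hn C) (clone_m hm hn C') /\
      subset_ops (clone_n hm hn C) (clone_n hm hn C'))).
Proof.
split.
  move=> C [Cclone C_pres Cadd]; split.
  - apply: (in_Jk_clone_restr hm (leq_pmulr m hn) (dvdn_mulr n (dvdnn m)) Cclone _ Cadd).
    by move=> k f /C_pres [].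
  - apply: (in_Jk_clone_restr hn (leq_pmull n hm) (dvdn_mull m (dvdnn n)) Cclone _ Cadd).
    by move=> k f /C_pres [].
split; first exact: in_J_clone_prod.
split; first exact: clone_prod_clone_restr.
split; last exact: subset_ops_clone_restr.
move=> D E [Dclone _] [Eclone _].
by split; [exact: clone_m_clone_prod | exact: clone_n_clone_prod].
Qed.
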